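(* Let $n\ge2$, let $\mathsf r=[r_1,\dots,r_{2n-2}]$ be a tree-like factorization of $\lambda_n$, and let $k\in\{1,\dots,n-1\}$. Then exactly two of the reflections $r_1,\dots,r_{2n-2}$ increase $k$, namely the first and the last reflection in the sequence having an endpoint congruent to $k$ modulo $n$ (i.e. expressible as $(\!(a,b)\!)$ with $a\equiv k$ or $b\equiv k \pmod n$). Moreover there is an integer $b_k$ such that: if $b_k>k$, these two reflections are $(\!(b_k-n,k)\!)$ (the earlier one) and $(\!(k,b_k)\!)$ (the later one); if $b_k<k$, they are $(\!(b_k,k)\!)$ (the earlier one) and $(\!(k-n,b_k)\!)$ (the later one).
   Context: The affine symmetric group $\widetilde S_n$ is the group, under composition $(vw)(k)=v(w(k))$, of bijections $w:\mathbb Z\to\mathbb Z$ with $w(i+n)=w(i)+n$ and $\sum_{i=1}^n w(i)=\binom{n+1}{2}$. For $i\not\equiv j\pmod n$, $(\!(i,j)\!)$ is the affine reflection interchanging $i+kn$ and $j+kn$ for all $k\in\mathbb Z$; $(\!(i,j)\!)=(\!(j,i)\!)=(\!(i+kn,j+kn)\!)$. Let $\lambda_n$ be the element with $\lambda_n(k)=k+n$ for $k\not\equiv0\pmod n$ and $\lambda_n(k)=k-n(n-1)$ for $k\equiv 0\pmod n$; its reflection length is $2n-2$. $\textsc{fact}(\lambda_n)$ is the set of sequences $[r_1,\dots,r_{2n-2}]$ of reflections with $r_1\cdots r_{2n-2}=\lambda_n$. Such a sequence is tree-like if one can write $r_k=(\!(a_{k-1},b_k)\!)$ with integers $a_{k-1}<b_k$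 ($1\le k\le 2n-2$) and $a_k\equiv b_k\pmod n$ ($1\le k\le 2n-3$). A reflection $r_\ell$ of $\mathsf r$ increases (resp. decreases) an integer $k$ if $r_\ell r_{\ell+1}\cdots r_{2n-2}(k)>r_{\ell+1}\cdots r_{2n-2}(k)$ (resp. $<$), where the empty product is the identity. *)

From Stdlib Require Import ZArith Arith Lia.
Open Scope Z_scope.

(* The affine reflection ((i,j)) in the affine symmetric group on n letters:
   it interchanges i + t n and j + t n for all t (assumes i, j not congruent mod n). *)
Definition refl (n i j : Z) : Z -> Z :=
  fun x => if Z.eqb (x mod n) (i mod n) then x + (j - i)
           else if Z.eqb (x mod n) (j mod n) then x + (i - j)
           else x.

Definition is_refl (n : Z) (f : Z -> Z) : Prop :=
  exists i j, i mod n <> j mod n /\ forall x, f x = refl n i j x.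

Definition is_refl_ij (n : Z) (f : Z -> Z) (i j : Z) : Prop :=
  i mod n <> j mod n /\ forall x, f x = refl n i j x.

Definition lam (n : Z) : Z -> Z :=
  fun x => if Z.eqb (x mod n) 0 then x - n * (n - 1) else x + n.

(* prodseg r l c = r_l o r_(l+1) o ... o r_(l+c-1)  (composition (vw)(k)=v(w(k))),
   the empty product being the identity. *)
Fixpoint prodseg (r : nat -> Z -> Z) (l : nat) (c : nat) : Z -> Z :=
  match c with
  | O => fun x => x
  | S c' => fun x => r l (prodseg r (S l) c' x)
  end.

Definition is_fact_lam (n : nat) (r : nat -> Z -> Z) : Prop :=
  (forall l, (1 <= l <= 2 * n - 2)%nat -> is_refl (Z.of_nat n) (r l)) /\
  (forall x, prodseg r 1 (2 * n - 2) x = lam (Z.of_nat n) x).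

Definition tree_like (n : nat) (r : nat -> Z -> Z) : Prop :=
  exists a b : nat -> Z,
    (forall k, (1 <= k <= 2 * n - 2)%nat ->
       is_refl_ij (Z.of_nat n) (r k) (a (k - 1)%nat) (b k) /\ a (k - 1)%nat < b k) /\
    (forall k, (1 <= k <= 2 * n - 3)%nat ->
       a k mod Z.of_nat n = b k mod Z.of_nat n).

(* r_l increases x: r_l r_(l+1) ... r_m (x) > r_(l+1) ... r_m (x), m = 2n-2. *)
Definition increases (n : nat) (r : nat -> Z -> Z) (l : nat) (x : Z) : Prop :=
  prodseg r l (2 * n - 2 + 1 - l) x > prodseg r (S l) (2 * n - 2 - l) x.

Definition has_endpoint (n : Z) (f : Z -> Z) (k : Z) : Prop :=
  exists a b, is_refl_ij n f a b /\ (a mod n = k mod n \/ b mod n = k mod n).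

(* Follow the strand of a point x under the suffix products r_l ... r_(2n-2),
   from the last step down to the first.  The strand of b_(2n-2) sits in the
   class of b_l just before step l and is pushed down by r_l; as the whole
   product is lambda_n, this forces b_(2n-2) = 0 mod n.  So the strand of any
   x <> 0 mod n avoids the class of b_l: each r_l fixes it or lifts it by
   b_l - a_(l-1) > 0, and altogether it rises from x to lambda_n(x) = x + n.
   A single lift would be by n, impossible for a reflection exchanging two
   distinct classes, so each of the n - 1 nonzero classes is lifted at least
   twice; only one class is lifted at each of the 2n - 2 steps, hence each is
   lifted exactly twice, at steps l1 < l2.  If b_k is the position of the
   strand of k between its two lifts, then r_l2 = ((k, b_k)) and
   r_l1 = ((b_k, k + n)) = ((b_k - n, k)). *)

From Stdlib Require Import ZArith Arith Lia List Classical.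
Open Scope Z_scope.

Lemma mod_add_shift (N y i j : Z) :
  y mod N = i mod N -> (y + (j - i)) mod N = j mod N.
Proof.
  intros Hy. rewrite Zplus_mod, Hy, <- Zplus_mod.
  now replace (i + (j - i)) with j by ring.
Qed.

Lemma mod_add_modulus (N y : Z) : (y + N) mod N = y mod N.
Proof. rewrite <- (Z_mod_plus_full y 1 N). f_equal; ring. Qed.

Lemma mod_sub_modulus (N y : Z) : (y - N) mod N = y mod N.
Proof. rewrite <- (Z_mod_plus_full y (-1) N). f_equal; ring. Qed.

Lemma refl_fst (N i j y : Z) : y mod N = i mod N -> refl N i j y = y + (j - i).
Proof. intros Hy. unfold refl. now rewrite Hy, Z.eqb_refl. Qed.

Lemma refl_snd (N i j y : Z) :
  y mod N <> i mod N -> y mod N = j mod N -> refl N i j y = y + (i - j).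
Proof.
  intros Hi Hj. unfold refl.
  destruct (Z.eqb_spec (y mod N) (i mod N)); [contradiction|].
  now rewrite Hj, Z.eqb_refl.
Qed.

Lemma refl_other (N i j y : Z) :
  y mod N <> i mod N -> y mod N <> j mod N -> refl N i j y = y.
Proof.
  intros Hi Hj. unfold refl.
  destruct (Z.eqb_spec (y mod N) (i mod N)); [contradiction|].
  now destruct (Z.eqb_spec (y mod N) (j mod N)).
Qed.

Lemma refl_mod (N i j y : Z) :
  refl N i j y mod N =
  if y mod N =? i mod N then j mod N
  else if y mod N =? j mod N then i mod N else y mod N.
Proof.
  destruct (Z.eqb_spec (y mod N) (i mod N)) as [Hi|Hi].
  - rewrite refl_fst by exact Hi. now apply mod_add_shift.
  - destruct (Z.eqb_spec (y mod N) (j mod N)) as [Hj|Hj].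
    + rewrite refl_snd by assumption. now apply mod_add_shift.
    + now rewrite refl_other.
Qed.

Lemma refl_mod_inj (N i j y y' : Z) :
  i mod N <> j mod N -> y mod N <> y' mod N ->
  refl N i j y mod N <> refl N i j y' mod N.
Proof.
  intros Hij Hy. rewrite !refl_mod.
  destruct (Z.eqb_spec (y mod N) (i mod N)), (Z.eqb_spec (y mod N) (j mod N)),
    (Z.eqb_spec (y' mod N) (i mod N)), (Z.eqb_spec (y' mod N) (j mod N));
    congruence.
Qed.

Lemma refl_shift (N i j i' j' x : Z) :
  i mod N = i' mod N -> j mod N = j' mod N -> j - i = j' - i' ->
  refl N i j x = refl N i' j' x.
Proof.
  intros Hi Hj Hd. unfold refl. rewrite Hi, Hj.
  destruct (x mod N =? i' mod N); [lia|].
  destruct (x mod N =? j' mod N); lia.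
Qed.

Lemma refl_moves (N i j y : Z) :
  i mod N <> j mod N -> y mod N = i mod N \/ y mod N = j mod N ->
  refl N i j y <> y.
Proof.
  intros Hij [Hy|Hy].
  - rewrite refl_fst by exact Hy. intros E. apply Hij. f_equal. lia.
  - rewrite refl_snd by congruence. intros E. apply Hij. f_equal. lia.
Qed.

Lemma is_refl_ij_shift (N : Z) (f : Z -> Z) (i j i' j' : Z) :
  is_refl_ij N f i j -> i mod N = i' mod N -> j mod N = j' mod N ->
  j - i = j' - i' -> is_refl_ij N f i' j'.
Proof.
  intros [Hij Hf] Hi Hj Hd. split; [congruence|].
  intros x. rewrite Hf. now apply refl_shift.
Qed.

Lemma has_endpoint_moves (N : Z) (f : Z -> Z) (k y : Z) :
  has_endpoint N f k -> y mod N = k mod N -> f y <> y.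
Proof.
  intros [i [j [[Hij Hf] Hk]]] Hy. rewrite Hf.
  apply refl_moves; [exact Hij|]. destruct Hk; [left|right]; congruence.
Qed.

Lemma nat_ind_down (P : nat -> Prop) (lo hi : nat) :
  P hi -> (forall l, (lo <= l < hi)%nat -> P (S l) -> P l) ->
  forall l, (lo <= l <= hi)%nat -> P l.
Proof.
  intros Hhi Hstep l Hl. remember (hi - l)%nat as t eqn:Ht. revert l Hl Ht.
  induction t as [|t IH]; intros l Hl Ht.
  - now replace l with hi by lia.
  - apply Hstep; [lia|]. apply IH; lia.
Qed.

Lemma list_sum_map_lower (f : nat -> nat) (ks : list nat) (k : nat) :
  (forall j, 2 <= f j)%nat -> (3 <= f k)%nat -> In k ks ->
  (2 * length ks + 1 <= list_sum (map f ks))%nat.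
Proof.
  intros H2 H3. induction ks as [|j ks IH]; [intros []|].
  intros [->|Hk]; simpl.
  - enough (2 * length ks <= list_sum (map f ks))%nat by lia.
    clear IH. induction ks as [|j' ks IH']; simpl; [lia|].
    specialize (H2 j'). lia.
  - specialize (IH Hk). specialize (H2 j). lia.
Qed.

Section DisjointWitnesses.

Variable P : nat -> nat -> Prop.
Hypothesis P_functional : forall k1 k2 l, P k1 l -> P k2 l -> k1 = k2.

Lemma witnesses_union (ks : list nat) (c : nat -> nat) :
  NoDup ks ->
  (forall k, In k ks ->
     exists ws, NoDup ws /\ (c k <= length ws)%nat /\ forall l, In l ws -> P k l) ->
  exists ws, NoDup ws /\ (list_sum (map c ks) <= length ws)%nat /\
    forall l, In l ws -> exists k, In k ks /\ P k l.
Proof.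
  induction ks as [|k ks IH]; intros Hks Hw.
  - exists nil. split; [constructor|]. split; [simpl; lia|]. intros l [].
  - inversion Hks as [|? ? Hk Hks']; subst.
    destruct (Hw k (or_introl eq_refl)) as [wk [Hwk [Hck Pwk]]].
    destruct IH as [ws [Hws [Hc Pws]]]; [exact Hks'|intros k' Hk'; apply Hw; now right|].
    exists (wk ++ ws). split; [|split].
    + apply NoDup_app; [exact Hwk|exact Hws|]. intros l Hl Hl'.
      destruct (Pws l Hl') as [k' [Hk' Pk']].
      apply Hk. now rewrite (P_functional k k' l (Pwk l Hl) Pk').
    + rewrite length_app. simpl. lia.
    + intros l Hl. apply in_app_or in Hl as [Hl|Hl].
      * exists k. split; [now left|now apply Pwk].
      * destruct (Pws l Hl) as [k' [Hk' Pk']]. exists k'. split; [now right|exact Pk'].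
Qed.

Lemma at_most_two_witnesses (K m : nat) :
  (m <= 2 * K)%nat ->
  (forall k l, P k l -> (1 <= l <= m)%nat) ->
  (forall k, (1 <= k <= K)%nat -> exists l1 l2, l1 <> l2 /\ P k l1 /\ P k l2) ->
  forall k l1 l2 l, (1 <= k <= K)%nat -> l1 <> l2 -> P k l1 -> P k l2 -> P k l ->
  l = l1 \/ l = l2.
Proof.
  intros Hm Hrange Htwo k l1 l2 l Hk H12 P1 P2 Pl.
  destruct (Nat.eq_dec l l1) as [|H1]; [now left|].
  destruct (Nat.eq_dec l l2) as [|H2]; [now right|]. exfalso.
  set (c := fun j => if Nat.eq_dec j k then 3%nat else 2%nat).
  destruct (witnesses_union (seq 1 K) c (seq_NoDup K 1)) as [ws [Hws [Hc Pws]]].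
  { intros j Hj. apply in_seq in Hj. unfold c.
    destruct (Nat.eq_dec j k) as [->|Hjk].
    - exists (l1 :: l2 :: l :: nil). split; [|split; [simpl; lia|]].
      + repeat constructor; simpl; intuition congruence.
      + intros x Hx. simpl in Hx. intuition congruence.
    - destruct (Htwo j ltac:(lia)) as [u [v [Huv [Pu Pv]]]].
      exists (u :: v :: nil). split; [|split; [simpl; lia|]].
      + repeat constructor; simpl; intuition congruence.
      + intros x Hx. simpl in Hx. intuition congruence. }
  assert (Hlen : (length ws <= m)%nat).
  { rewrite <- (length_seq m 1). apply NoDup_incl_length; [exact Hws|].
    intros x Hx. destruct (Pws x Hx) as [j [_ Pj]].
    apply in_seq. specialize (Hrange j x Pj). lia. }
  assert (Hsum : (2 * K + 1 <= list_sum (map c (seq 1 K)))%nat).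
  { rewrite <- (length_seq K 1) at 1. apply (list_sum_map_lower c (seq 1 K) k).
    - intros j. unfold c. destruct (Nat.eq_dec j k); lia.
    - unfold c. destruct (Nat.eq_dec k k); [lia|contradiction].
    - apply in_seq. lia. }
  lia.
Qed.

End DisjointWitnesses.

Record tree_like_factorization (n : nat) (r : nat -> Z -> Z) (a b : nat -> Z) : Prop := {
  tlf_n : (2 <= n)%nat;
  tlf_refl : forall l, (1 <= l <= 2 * n - 2)%nat ->
    is_refl_ij (Z.of_nat n) (r l) (a (l - 1)%nat) (b l);
  tlf_lt : forall l, (1 <= l <= 2 * n - 2)%nat -> a (l - 1)%nat < b l;
  tlf_chain : forall l, (1 <= l <= 2 * n - 3)%nat ->
    a l mod Z.of_nat n = b l mod Z.of_nat n;
  tlf_lam : forall x, prodseg r 1 (2 * n - 2) x = lam (Z.of_nat n) x }.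

Lemma tree_like_factorization_exists (n : nat) (r : nat -> Z -> Z) :
  (2 <= n)%nat -> is_fact_lam n r -> tree_like n r ->
  exists a b, tree_like_factorization n r a b.
Proof.
  intros Hn [_ Hlam] [a [b [Hab Hchain]]]. exists a, b.
  split; [exact Hn| |exact (fun l Hl => proj2 (Hab l Hl))|exact Hchain|exact Hlam].
  intros l Hl. exact (proj1 (Hab l Hl)).
Qed.

Definition tail_prod (n : nat) (r : nat -> Z -> Z) (l : nat) (x : Z) : Z :=
  prodseg r l (2 * n - 2 + 1 - l) x.

Lemma increases_tail_prod (n : nat) (r : nat -> Z -> Z) (l : nat) (x : Z) :
  increases n r l x <-> tail_prod n r (S l) x < tail_prod n r l x.
Proof.
  unfold increases, tail_prod.
  replace (2 * n - 2 + 1 - S l)%nat with (2 * n - 2 - l)%nat by lia. lia.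
Qed.

Section TreeLikeFactorization.

Variables (n : nat) (r : nat -> Z -> Z) (a b : nat -> Z).
Hypothesis F : tree_like_factorization n r a b.

Local Notation N := (Z.of_nat n).
Local Notation m := (2 * n - 2)%nat.
Local Notation tail := (tail_prod n r).

Lemma tail_prod_end (x : Z) : tail (S m) x = x.
Proof. unfold tail_prod. now replace (m + 1 - S m)%nat with 0%nat by lia. Qed.

Lemma tail_prod_start (x : Z) : tail 1 x = lam N x.
Proof.
  unfold tail_prod. replace (m + 1 - 1)%nat with m by lia. apply (tlf_lam _ _ _ _ F).
Qed.

Lemma tail_prod_succ (l : nat) (x : Z) : (l <= m)%nat -> tail l x = r l (tail (S l) x).
Proof.
  intros Hl. unfold tail_prod.
  now replace (m + 1 - l)%nat with (S (m + 1 - S l)) by lia.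
Qed.

Lemma tail_prod_step (l : nat) (x : Z) : (1 <= l <= m)%nat ->
  tail l x = refl N (a (l - 1)%nat) (b l) (tail (S l) x).
Proof.
  intros Hl. rewrite tail_prod_succ by lia. apply (tlf_refl _ _ _ _ F l Hl).
Qed.

Lemma tail_prod_mod_inj (x y : Z) : x mod N <> y mod N ->
  forall l, (1 <= l <= S m)%nat -> tail l x mod N <> tail l y mod N.
Proof.
  intros Hxy. apply nat_ind_down.
  - now rewrite !tail_prod_end.
  - intros l Hl IH. rewrite !(tail_prod_step l) by lia.
    apply refl_mod_inj; [apply (tlf_refl _ _ _ _ F); lia|exact IH].
Qed.

Lemma tail_prod_b_last_mod (l : nat) : (1 <= l <= m)%nat ->
  tail (S l) (b m) mod N = b l mod N.
Proof.
  revert l. apply nat_ind_down.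
  - now rewrite tail_prod_end.
  - intros l Hl IH. rewrite (tail_prod_step (S l)) by lia.
    replace (S l - 1)%nat with l by lia.
    destruct (tlf_refl _ _ _ _ F (S l) ltac:(lia)) as [Hab _].
    replace (S l - 1)%nat with l in Hab by lia.
    rewrite refl_snd by congruence.
    rewrite mod_add_shift by exact IH. apply (tlf_chain _ _ _ _ F). lia.
Qed.

Lemma tail_prod_b_last_decreases (l : nat) : (1 <= l <= m)%nat ->
  tail l (b m) < tail (S l) (b m).
Proof.
  intros Hl. rewrite (tail_prod_step l) by exact Hl.
  destruct (tlf_refl _ _ _ _ F l Hl) as [Hab _].
  pose proof (tlf_lt _ _ _ _ F l Hl).
  pose proof (tail_prod_b_last_mod l Hl).
  rewrite refl_snd by congruence. lia.
Qed.

Lemma b_last_mod_zero : b m mod N = 0.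
Proof.
  pose proof (tlf_n _ _ _ _ F) as Hn.
  assert (Hdown : forall l, (1 <= l <= m)%nat -> tail l (b m) < b m).
  { apply nat_ind_down.
    - rewrite <- (tail_prod_end (b m)) at 2. apply tail_prod_b_last_decreases. lia.
    - intros l Hl IH. pose proof (tail_prod_b_last_decreases l ltac:(lia)). lia. }
  specialize (Hdown 1%nat ltac:(lia)). rewrite tail_prod_start in Hdown.
  unfold lam in Hdown. destruct (Z.eqb_spec (b m mod N) 0); [assumption|lia].
Qed.

Section NonzeroClass.

Variable x : Z.
Hypothesis x_nonzero : x mod N <> 0.

Lemma tail_prod_step_cases (l : nat) : (1 <= l <= m)%nat ->
  (tail (S l) x mod N = a (l - 1)%nat mod N /\
   tail l x = tail (S l) x + (b l - a (l - 1)%nat)) \/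
  tail l x = tail (S l) x.
Proof.
  intros Hl. rewrite (tail_prod_step l) by exact Hl.
  assert (Hb : tail (S l) x mod N <> b l mod N).
  { rewrite <- (tail_prod_b_last_mod l Hl). apply tail_prod_mod_inj; [|lia].
    now rewrite b_last_mod_zero. }
  destruct (Z.eq_dec (tail (S l) x mod N) (a (l - 1)%nat mod N)) as [Ha|Ha].
  - left. split; [exact Ha|]. now apply refl_fst.
  - right. now apply refl_other.
Qed.

Lemma tail_prod_start_nonzero : tail 1 x = x + N.
Proof.
  rewrite tail_prod_start. unfold lam.
  now destruct (Z.eqb_spec (x mod N) 0).
Qed.

Lemma tail_prod_step_le (l : nat) : (1 <= l <= m)%nat -> tail (S l) x <= tail l x.
Proof.
  intros Hl. pose proof (tlf_lt _ _ _ _ F l Hl).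
  destruct (tail_prod_step_cases l Hl) as [[_ E]|E]; lia.
Qed.

Lemma increase_mod (l : nat) : (1 <= l <= m)%nat ->
  tail (S l) x < tail l x -> tail (S l) x mod N = a (l - 1)%nat mod N.
Proof. intros Hl Hup. now destruct (tail_prod_step_cases l Hl) as [[Ha _]|E]; [|lia]. Qed.

Lemma increase_refl (l : nat) : (1 <= l <= m)%nat ->
  tail (S l) x < tail l x -> is_refl_ij N (r l) (tail (S l) x) (tail l x).
Proof.
  intros Hl Hup.
  destruct (tail_prod_step_cases l Hl) as [[Ha E]|E]; [|lia].
  apply (is_refl_ij_shift _ _ _ _ _ _ (tlf_refl _ _ _ _ F l Hl)); [congruence| |lia].
  rewrite E. symmetry. now apply mod_add_shift.
Qed.

Lemma tail_prod_const (lo hi : nat) :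
  (1 <= lo <= S hi)%nat -> (hi <= m)%nat ->
  (forall l, (lo <= l <= hi)%nat -> ~ tail (S l) x < tail l x) ->
  tail lo x = tail (S hi) x.
Proof.
  intros Hlo Hhi Hfix.
  apply (nat_ind_down (fun l => tail l x = tail (S hi) x) lo (S hi)); [reflexivity| |lia].
  intros l Hl IH. rewrite <- IH.
  pose proof (tail_prod_step_le l ltac:(lia)). specialize (Hfix l ltac:(lia)). lia.
Qed.

Lemma exists_two_increases : exists l1 l2, (1 <= l1 < l2)%nat /\ (l2 <= m)%nat /\
  tail (S l1) x < tail l1 x /\ tail (S l2) x < tail l2 x.
Proof.
  pose proof (tlf_n _ _ _ _ F) as Hn.
  assert (Hone : exists l0, (1 <= l0 <= m)%nat /\ tail (S l0) x < tail l0 x).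
  { apply NNPP. intros Hnone.
    assert (E : tail 1 x = tail (S m) x).
    { apply tail_prod_const; try lia. intros l Hl Hup. apply Hnone. now exists l. }
    rewrite tail_prod_end, tail_prod_start_nonzero in E. lia. }
  destruct Hone as [l0 [Hl0 Hup0]].
  destruct (classic (exists l, (1 <= l <= m)%nat /\ l <> l0 /\ tail (S l) x < tail l x))
    as [[l [Hl [Hne Hup]]]|Hnone].
  - destruct (Nat.lt_gt_cases l l0) as [[Hlt|Hgt] _]; [exact Hne| |].
    + exists l, l0. repeat split; (lia || assumption).
    + exists l0, l. repeat split; (lia || assumption).
  - exfalso.
    (* the single jump would be [N], but [r l0] exchanges distinct classes *)
    assert (Hbefore : tail 1 x = tail l0 x).
    { replace l0 with (S (l0 - 1)) by lia.
      apply tail_prod_const; try lia.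
      intros l Hl Hup. apply Hnone. exists l. repeat split; (lia || assumption). }
    assert (Hafter : tail (S l0) x = x).
    { rewrite <- (tail_prod_end x) at 2. apply tail_prod_const; try lia.
      intros l Hl Hup. apply Hnone. exists l. repeat split; (lia || assumption). }
    destruct (increase_refl l0 Hl0 Hup0) as [Hne _].
    rewrite Hafter, <- Hbefore, tail_prod_start_nonzero, mod_add_modulus in Hne.
    contradiction.
Qed.

Section ExactlyTwoIncreases.

Variables l1 l2 : nat.
Hypothesis l1_lt_l2 : (1 <= l1 < l2)%nat.
Hypothesis l2_le_m : (l2 <= m)%nat.
Hypothesis increases_only : forall l, (1 <= l <= m)%nat ->
  tail (S l) x < tail l x <-> l = l1 \/ l = l2.

Lemma tail_prod_after_last (l : nat) : (l2 <= l <= m)%nat -> tail (S l) x = x.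
Proof.
  intros Hl. rewrite <- (tail_prod_end x) at 2. apply tail_prod_const; try lia.
  intros l' Hl' Hup. apply increases_only in Hup; lia.
Qed.

Lemma tail_prod_before_first (l : nat) : (l < l1)%nat -> tail (S l) x = x + N.
Proof.
  intros Hl. rewrite <- tail_prod_start_nonzero. symmetry.
  apply tail_prod_const; try lia.
  intros l' Hl' Hup. apply increases_only in Hup; lia.
Qed.

Lemma has_endpoint_between (l : nat) : (1 <= l <= m)%nat ->
  has_endpoint N (r l) x -> (l1 <= l <= l2)%nat.
Proof.
  intros Hl Hend.
  assert (Hup : tail (S l) x mod N = x mod N -> l = l1 \/ l = l2).
  { intros Hy. apply increases_only; [exact Hl|].
    pose proof (tail_prod_step_le l Hl).
    enough (tail l x <> tail (S l) x) by lia.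
    rewrite tail_prod_succ by lia. exact (has_endpoint_moves _ _ _ _ Hend Hy). }
  destruct (Nat.lt_ge_cases l l1) as [Hlt|Hge].
  - rewrite tail_prod_before_first, mod_add_modulus in Hup by exact Hlt.
    specialize (Hup eq_refl). lia.
  - destruct (Nat.le_gt_cases l l2) as [Hle|Hgt]; [lia|].
    rewrite tail_prod_after_last in Hup by lia.
    specialize (Hup eq_refl). lia.
Qed.

Lemma refl_at_two_increases : exists bx, x < bx /\
  is_refl_ij N (r l1) (bx - N) x /\ is_refl_ij N (r l2) x bx.
Proof.
  assert (Hup1 : tail (S l1) x < tail l1 x) by (apply increases_only; lia).
  assert (Hup2 : tail (S l2) x < tail l2 x) by (apply increases_only; lia).
  assert (E2 : tail (S l2) x = x) by (apply tail_prod_after_last; lia).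
  assert (E1 : tail (S l1) x = tail l2 x).
  { replace l2 with (S (l2 - 1)) by lia. apply tail_prod_const; try lia.
    intros l Hl Hup. apply increases_only in Hup; lia. }
  assert (E0 : tail l1 x = x + N).
  { replace l1 with (S (l1 - 1)) by lia. apply tail_prod_before_first. lia. }
  pose proof (increase_refl l1 ltac:(lia) Hup1) as R1.
  pose proof (increase_refl l2 ltac:(lia) Hup2) as R2.
  rewrite E1, E0 in R1. rewrite E2 in R2, Hup2.
  exists (tail l2 x). split; [exact Hup2|]. split; [|exact R2].
  apply (is_refl_ij_shift _ _ _ _ _ _ R1); [now rewrite mod_sub_modulus|apply mod_add_modulus|lia].
Qed.

End ExactlyTwoIncreases.

End NonzeroClass.

Lemma increasing_class_unique (x y : Z) (l : nat) :
  x mod N <> 0 -> y mod N <> 0 -> (1 <= l <= m)%nat ->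
  tail (S l) x < tail l x -> tail (S l) y < tail l y -> x mod N = y mod N.
Proof.
  intros Hx Hy Hl Ux Uy.
  destruct (Z.eq_dec (x mod N) (y mod N)) as [E|Hne]; [exact E|exfalso].
  apply (tail_prod_mod_inj x y Hne (S l)); [lia|].
  now rewrite (increase_mod x Hx l Hl Ux), (increase_mod y Hy l Hl Uy).
Qed.

Lemma increases_exactly_two (x : Z) : 1 <= x <= N - 1 ->
  exists l1 l2, (1 <= l1 < l2)%nat /\ (l2 <= m)%nat /\
    forall l, (1 <= l <= m)%nat -> tail (S l) x < tail l x <-> l = l1 \/ l = l2.
Proof.
  intros Hx.
  assert (Hnz : forall k, (1 <= k <= n - 1)%nat -> Z.of_nat k mod N <> 0)
    by (intros k Hk; rewrite Z.mod_small; lia).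
  set (P := fun k l => (1 <= k <= n - 1)%nat /\ (1 <= l <= m)%nat /\
                       tail (S l) (Z.of_nat k) < tail l (Z.of_nat k)).
  assert (P_functional : forall k1 k2 l, P k1 l -> P k2 l -> k1 = k2).
  { intros k1 k2 l [Hk1 [Hl U1]] [Hk2 [_ U2]]. apply Nat2Z.inj.
    rewrite <- (Z.mod_small (Z.of_nat k1) N), <- (Z.mod_small (Z.of_nat k2) N) by lia.
    exact (increasing_class_unique _ _ l (Hnz k1 Hk1) (Hnz k2 Hk2) Hl U1 U2). }
  rewrite <- (Z2Nat.id x) by lia.
  assert (Hk : (1 <= Z.to_nat x <= n - 1)%nat) by lia.
  destruct (exists_two_increases _ (Hnz _ Hk)) as [l1 [l2 [H12 [Hm [U1 U2]]]]].
  exists l1, l2. split; [exact H12|]. split; [exact Hm|].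
  intros l Hl. split; [|intros [-> | ->]; assumption].
  intros Ul.
  apply (at_most_two_witnesses P P_functional (n - 1) m) with (k := Z.to_nat x);
    [lia| | |exact Hk|lia|repeat split; (lia || assumption)..].
  - intros k l' [_ [Hl' _]]. exact Hl'.
  - intros k Hk'. destruct (exists_two_increases _ (Hnz k Hk')) as [u [v [Huv [Hv [Uu Uv]]]]].
    exists u, v. repeat split; (lia || assumption).
Qed.

End TreeLikeFactorization.

Theorem corollary3p6 (n : nat) (r : nat -> Z -> Z) (k : Z) :
  (2 <= n)%nat ->
  is_fact_lam n r ->
  tree_like n r ->
  1 <= k <= Z.of_nat n - 1 ->
  exists l1 l2 : nat,
    (1 <= l1 < l2)%nat /\ (l2 <= 2 * n - 2)%nat /\
    (* l1 is the first, l2 the last, reflection with an endpoint = k mod n *)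
    has_endpoint (Z.of_nat n) (r l1) k /\
    has_endpoint (Z.of_nat n) (r l2) k /\
    (forall l, (1 <= l <= 2 * n - 2)%nat ->
       has_endpoint (Z.of_nat n) (r l) k -> (l1 <= l <= l2)%nat) /\
    (* exactly these two reflections increase k *)
    (forall l, (1 <= l <= 2 * n - 2)%nat ->
       (increases n r l k <-> l = l1 \/ l = l2)) /\
    exists bk : Z,
      bk mod Z.of_nat n <> k mod Z.of_nat n /\
      (bk > k ->
         is_refl_ij (Z.of_nat n) (r l1) (bk - Z.of_nat n) k /\
         is_refl_ij (Z.of_nat n) (r l2) k bk) /\
      (bk < k ->
         is_refl_ij (Z.of_nat n) (r l1) bk k /\
         is_refl_ij (Z.of_nat n) (r l2) (k - Z.of_nat n) bk).
Proof.
  intros Hn Hfact Htree Hk.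
  destruct (tree_like_factorization_exists n r Hn Hfact Htree) as [a [b F]].
  assert (Hk0 : k mod Z.of_nat n <> 0) by (rewrite Z.mod_small; lia).
  destruct (increases_exactly_two n r a b F k Hk) as [l1 [l2 [H12 [Hl2 Hinc]]]].
  destruct (refl_at_two_increases n r a b F k Hk0 l1 l2 H12 Hl2 Hinc)
    as [bk [Hlt [R1 R2]]].
  exists l1, l2. split; [exact H12|]. split; [exact Hl2|].
  split; [exists (bk - Z.of_nat n), k; split; [exact R1|now right]|].
  split; [exists k, bk; split; [exact R2|now left]|].
  split; [exact (has_endpoint_between n r a b F k Hk0 l1 l2 H12 Hl2 Hinc)|].
  split; [intros l Hl; rewrite increases_tail_prod; exact (Hinc l Hl)|].
  exists bk. split; [intros E; apply (proj1 R2); now symmetry|].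
  (* our [bk] lies in (k, k + n), so the second alternative is vacuous *)
  split; [now split|lia].
Qed.
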